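(* Let $\Gamma$ be a distance-regular graph with diameter $D\ge3$ and $a_1\ne0$. Let $\sigma_0,\dots,\sigma_D$ be a nontrivial pseudo cosine sequence which is tight, with auxiliary parameter $\varepsilon$, and write $\sigma=\sigma_1$. Then for $1\le i\le D-1$ the quantities $(\sigma_{i+1}-\sigma_i)(\sigma_{i-1}-\sigma_i)$ and $(\sigma^2-\sigma_2)(1-\varepsilon\sigma)$ are nonzero and $$a_i=g\,\frac{(\sigma_{i+1}-\sigma\sigma_i)(\sigma_{i-1}-\sigma\sigma_i)}{(\sigma_{i+1}-\sigma_i)(\sigma_{i-1}-\sigma_i)},\qquad\text{where}\quad g=\frac{(\varepsilon-1)(1-\sigma_2)}{(\sigma^2-\sigma_2)(1-\varepsilon\sigma)}.$$
   Context: $\Gamma$ is a finite connected undirected graph without loops or multiple edges, distance-regular with diameter $D$, intersection numbers $a_i,b_i,c_i$ ($c_0=0$, $b_D=0$), valency $k$, $c_i+a_i+b_i=k$. For $\theta\in\mathbb{R}$ the pseudo cosine sequence for $\theta$ is the sequence of reals $\sigma_0,\dots,\sigma_D$ with $\sigma_0=1$ and $c_i\sigma_{i-1}+a_i\sigma_i+b_i\sigma_{i+1}=\theta\sigma_i$ for $0\le i\le D-1$; nontrivial means $\sigma_1\ne1$. Pseudo cosine sequences $\sigma_i$, $\rho_i$ form a tight pair if $(\sigma_i\rho_i)_{i=0}^D$ is a pseudo cosine sequence. For a tight pair of nontrivial pseudo cosine sequences, an auxiliary parameter is a real $\varepsilon$ with $\sigma_i\rho_i-\sigma_{i-1}\rho_{i-1}=\varepsilon(\sigma_{i-1}\rho_i-\sigma_i\rho_{i-1})$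 for $1\le i\le D$. When $a_1\ne0$, a nontrivial pseudo cosine sequence is tight if some nontrivial pseudo cosine sequence forms a tight pair with it; its auxiliary parameter is the (uniquely determined) auxiliary parameter of that pair. *)

From mathcomp Require Import all_boot all_order all_algebra.
Set Implicit Arguments. Unset Strict Implicit. Unset Printing Implicit Defensive.
Import Order.TTheory GRing.Theory Num.Theory.

Section Graph.
Variables (T : finType) (e : rel T).

Definition simple_graph := symmetric e /\ irreflexive e.

Fixpoint nball (x : T) (n : nat) : {set T} :=
  match n with
  | 0 => [set x]
  | n'.+1 => nball x n' :|: [set z | [exists y in nball x n', e y z]]
  end.

Definition connected_graph := forall x y : T, exists n, y \in nball x n.

Definition dist (x y : T) : nat :=
  find (fun n => y \in nball x n) (iota 0 #|T|).

Definition diameter : nat := (\max_(x : T) \max_(y : T) dist x y)%N.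

Definition distance_regular (D : nat) (a b c : nat -> nat) :=
  [/\ simple_graph, connected_graph, diameter = D &
   forall x y : T,
     [/\ #|[set z | e y z & (dist x z).+1 == dist x y]| = c (dist x y),
         #|[set z | e y z & dist x z == dist x y]| = a (dist x y) &
         #|[set z | e y z & dist x z == (dist x y).+1]| = b (dist x y)]].
End Graph.

Section Cosine.
Variables (R : realFieldType) (D : nat) (a b c : nat -> nat).
Local Open Scope ring_scope.

(* pseudo cosine sequence for theta: sigma_0 = 1 and
   c_i sigma_{i-1} + a_i sigma_i + b_i sigma_{i+1} = theta sigma_i, 0 <= i <= D-1
   (for i = 0, c_0 = 0, so the value used for sigma_{-1} is irrelevant). *)
Definition pseudo_cosine_for (theta : R) (s : nat -> R) :=
  s 0%N = 1 /\
  forall i : nat, (i < D)%N ->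
    (c i)%:R * s i.-1 + (a i)%:R * s i + (b i)%:R * s i.+1 = theta * s i.

Definition pseudo_cosine (s : nat -> R) := exists theta, pseudo_cosine_for theta s.

Definition nontrivial (s : nat -> R) := s 1%N != 1.

Definition tight_pair (s r : nat -> R) :=
  [/\ pseudo_cosine s, pseudo_cosine r & pseudo_cosine (fun i => s i * r i)].

Definition aux_param (s r : nat -> R) (eps : R) :=
  forall i : nat, (1 <= i <= D)%N ->
    s i * r i - s i.-1 * r i.-1 = eps * (s i.-1 * r i - s i * r i.-1).

Definition tight_with_aux (s : nat -> R) (eps : R) :=
  nontrivial s /\ pseudo_cosine s /\
  exists r : nat -> R, [/\ pseudo_cosine r, nontrivial r, tight_pair s r & aux_param s r eps].
End Cosine.

From Pilot Require Import Defs.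
From mathcomp Require Import all_boot all_order all_algebra.
From mathcomp Require Import zify ring lra.
Import Order.TTheory GRing.Theory Num.Theory.
Set Implicit Arguments. Unset Strict Implicit. Unset Printing Implicit Defensive.

(* From the graph only the standard facts on the intersection numbers are needed:
   a_i + b_i + c_i = k = b_0, c_0 = a_0 = 0, c_1 = 1, b_i > 0 (i < D), c_i > 0 (i > 0), and
   a_i > 0 for 0 < i < D, the latter because a_1 <> 0 puts every edge in a triangle.  Written as
   c_i (sigma_{i-1} - sigma_i) + b_i (sigma_{i+1} - sigma_i) = k (sigma - 1) sigma_i,
   the recurrence of rho together with the auxiliary relations at 1, i and i+1
   eliminates rho and yields a relation between b_i, c_i and sigma alone; eliminating
   b_i and c_i with the recurrence of sigma gives
     a_i (eps - sigma)(sigma_{i-1} - sigma_i)(sigma_{i+1} - sigma_i)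
       = k (eps - 1)(sigma_{i-1} - sigma sigma_i)(sigma_{i+1} - sigma sigma_i),
   whose case i = 1 determines k.  What remains is to show that nothing divided by
   vanishes: eps <> -1, 1, sigma and sigma_{i+1} <> sigma_i, sigma_2 <> 1, each of which
   would otherwise force c_i = k or violate the positivity of the intersection numbers. *)

Section Distance.
Variables (T : finType) (e : rel T).
Local Notation nball := (nball e).
Local Notation dist := (dist e).

Lemma dist_le_card x y : (dist x y <= #|T|)%N.
Proof. by rewrite /Defs.dist (leq_trans (find_size _ _)) // size_iota. Qed.

Lemma nball_dist x y : (dist x y < #|T|)%N -> y \in nball x (dist x y).
Proof.
move=> lt_dist; have has_n : has (fun n => y \in nball x n) (iota 0 #|T|).
  by rewrite has_find size_iota.
by have := nth_find 0 has_n; rewrite nth_iota // -(size_iota 0 #|T|) -has_find.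
Qed.

Lemma dist_le x y n : (n < #|T|)%N -> y \in nball x n -> (dist x y <= n)%N.
Proof.
move=> lt_n y_n; rewrite leqNgt; apply/negP => /(before_find 0).
by rewrite nth_iota // y_n.
Qed.

Lemma nballSP x n z :
  reflect (z \in nball x n \/ exists2 y, y \in nball x n & e y z) (z \in nball x n.+1).
Proof.
rewrite /= in_setU inE; apply: (iffP orP) => [[|/exists_inP] | [|[y y_n yz]]]; auto.
by right; apply/exists_inP; exists y.
Qed.

Lemma nball_edge x n y z : y \in nball x n -> e y z -> z \in nball x n.+1.
Proof. by move=> y_n yz; apply/nballSP; right; exists y. Qed.

Lemma nball_succ x n y : y \in nball x n -> y \in nball x n.+1.
Proof. by move=> y_n; apply/nballSP; left. Qed.

Lemma dist_xx x : dist x x = 0%N.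
Proof.
by apply/eqP; rewrite -leqn0 dist_le ?inE //; apply/card_gt0P; exists x.
Qed.

Lemma dist_eq0 x y : dist x y = 0%N -> y = x.
Proof.
move=> d0; have /nball_dist : (dist x y < #|T|)%N by rewrite d0; apply/card_gt0P; exists x.
by rewrite d0 inE => /eqP.
Qed.

Lemma dist_edge_le x y z : e y z -> (dist x z <= (dist x y).+1)%N.
Proof.
move=> yz; have [lt_y | ge_y] := ltnP (dist x y) #|T|; last first.
  exact: leq_trans (dist_le_card _ _) (leqW ge_y).
have [lt_Sy | ge_Sy] := ltnP (dist x y).+1 #|T|.
  exact/dist_le/(nball_edge (nball_dist lt_y)).
exact: leq_trans (dist_le_card _ _) ge_Sy.
Qed.

Lemma edge_levels x w j : (exists n, w \in nball x n) -> (j < dist x w)%N ->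
  exists v v', [/\ e v v', dist x v = j & dist x v' = j.+1].
Proof.
case=> n; elim: n w => [|n IH] w.
  by rewrite inE => /eqP ->; rewrite dist_xx.
case/nballSP => [/IH // | [y /IH y_n yw] lt_j].
have [lt_jy | ge_jy] := ltnP j (dist x y); first exact: y_n.
have le_w := dist_edge_le x yw.
exists y, w; split => //; lia.
Qed.

Hypotheses (e_sym : symmetric e) (e_irr : irreflexive e).

Lemma nball_shift_center x x' n y : e x x' -> y \in nball x' n -> y \in nball x n.+1.
Proof.
move=> xx'; elim: n y => [|n IH] y.
  by rewrite inE => /eqP ->; apply: nball_edge xx'; rewrite inE.
by case/nballSP => [/IH /nball_succ // | [z /IH z_n zy]]; apply: nball_edge zy.
Qed.

Lemma nball_sym n x y : y \in nball x n -> x \in nball y n.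
Proof.
elim: n x y => [|n IH] x y; first by rewrite !inE => /eqP ->.
case/nballSP => [/IH /nball_succ // | [z /IH z_n zy]].
by apply: nball_shift_center z_n; rewrite e_sym.
Qed.

Lemma dist_sym x y : dist x y = dist y x.
Proof. by apply: eq_find => n; apply/idP/idP => /nball_sym. Qed.

Lemma dist_edge_ge x y z : e y z -> (dist x y <= (dist x z).+1)%N.
Proof. by rewrite e_sym; apply: dist_edge_le. Qed.

Lemma dist_edge x y : e x y -> dist x y = 1%N.
Proof.
move=> xy; have := dist_edge_le x xy; rewrite dist_xx.
have : dist x y != 0%N by apply: contraTneq xy => /dist_eq0 ->; rewrite e_irr.
lia.
Qed.

Lemma dist1_edge x y : dist x y = 1%N -> e x y.
Proof.
move=> d1; have : (dist x y < #|T|)%N.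
  rewrite d1; apply/card_gt1P; exists x, y; split => //.
  by apply: contra_eqN d1 => /eqP <-; rewrite dist_xx.
move/nball_dist; rewrite d1 => /nballSP [|[z]]; rewrite inE => /eqP.
  by move=> yx; rewrite yx dist_xx in d1.
by move=> ->.
Qed.

Lemma card_neighbours_levels x y :
  #|[set z | e y z]| =
  (#|[set z | e y z & (dist x z).+1 == dist x y]| +
   #|[set z | e y z & dist x z == dist x y]| +
   #|[set z | e y z & dist x z == (dist x y).+1]|)%N.
Proof.
rewrite -!sum1_card !(big_mkcond (fun z => z \in _)) -!big_split /=.
apply: eq_bigr => z _; rewrite !inE; case yz: (e y z) => //=.
have := dist_edge_le x yz; have := dist_edge_ge x yz.
by move: (dist x z) (dist x y) => m n; do 3!case: eqP; lia.
Qed.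

End Distance.

Section DistanceRegular.
Variables (T : finType) (e : rel T) (D : nat) (a b c : nat -> nat).
Hypotheses (drg : distance_regular e D a b c) (D_gt0 : (0 < D)%N).
Local Notation dist := (dist e).

Let e_sym : symmetric e. Proof. by case: drg => -[]. Qed.
Let e_irr : irreflexive e. Proof. by case: drg => -[]. Qed.

Let drg_counts x y :
  [/\ #|[set z | e y z & (dist x z).+1 == dist x y]| = c (dist x y),
      #|[set z | e y z & dist x z == dist x y]| = a (dist x y) &
      #|[set z | e y z & dist x z == (dist x y).+1]| = b (dist x y)].
Proof. by case: drg => _ _ _; apply. Qed.

Lemma drg_edge_levels j : (j < D)%N ->
  exists x v v', [/\ e v v', dist x v = j & dist x v' = j.+1].
Proof.
case: drg => _ conn diam _ lt_jD.
have [x0 _ | T0] := pickP (@predT T); last first.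
  by move: diam D_gt0; rewrite /diameter big_pred0 // => <-.
have T_gt0 : (0 < #|T|)%N by apply/card_gt0P; exists x0.
have [x dx] := bigop.eq_bigmax (fun x => \max_y dist x y) T_gt0.
have [w dw] := bigop.eq_bigmax (fun y => dist x y) T_gt0.
exists x; apply: (edge_levels (conn x w)).
by move: diam; rewrite /diameter dx dw => ->.
Qed.

Lemma drg_dist_attained j : (j <= D)%N -> exists x y, dist x y = j.
Proof.
rewrite leq_eqVlt => /orP[/eqP -> | /drg_edge_levels [x [v [_ [_ xv _]]]]].
  have [x [_ [v' [_ _ xv']]]] := drg_edge_levels (j := D.-1) ltac:(lia).
  by exists x, v'; rewrite xv' prednK.
by exists x, v.
Qed.

Lemma drg_valency j : (j <= D)%N -> (a j + b j + c j = b 0)%N.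
Proof.
case/drg_dist_attained => x [y <-].
have <- : #|[set z | e y z]| = b 0%N.
  have [_ _] := drg_counts y y; rewrite dist_xx => <-; apply: eq_card => z.
  by rewrite !inE; case yz: (e y z); rewrite //= dist_edge.
have [<- <- <-] := drg_counts x y; rewrite (card_neighbours_levels e_sym x); lia.
Qed.

Lemma drg_c0 : c 0%N = 0%N.
Proof.
have [x [y xy]] := drg_dist_attained (leq0n D).
rewrite -[in LHS]xy; have [<- _ _] := drg_counts x y.
by rewrite xy; apply/eqP; rewrite cards_eq0; apply/eqP/setP => z; rewrite !inE andbF.
Qed.

Lemma drg_a0 : a 0%N = 0%N.
Proof.
have [x [y xy]] := drg_dist_attained (leq0n D).
rewrite -[in LHS]xy; have [_ <- _] := drg_counts x y.
rewrite xy; apply/eqP; rewrite cards_eq0; apply/eqP/setP => z; rewrite !inE.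
apply/negbTE/andP => -[yz /eqP/dist_eq0 zx].
by move: yz; rewrite zx (dist_eq0 xy) e_irr.
Qed.

Lemma drg_c1 : c 1%N = 1%N.
Proof.
have [x [v [v' [vv' /dist_eq0 vx xv']]]] := drg_edge_levels D_gt0.
rewrite -[in LHS]xv'; have [<- _ _] := drg_counts x v'; rewrite xv' -[RHS](cards1 x).
apply: eq_card => z; rewrite !inE; apply/andP/eqP => [[_ /eqP[/dist_eq0]] // | ->].
by rewrite e_sym -vx vv' dist_xx.
Qed.

Lemma drg_c_gt0 j : (0 < j <= D)%N -> (0 < c j)%N.
Proof.
case/andP => j_gt0 le_jD; have [x [v [v' [vv' xv xv']]]] := drg_edge_levels (j := j.-1) ltac:(lia).
have [] := drg_counts x v'; rewrite xv' prednK // => <- _ _.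
by apply/card_gt0P; exists v; rewrite !inE e_sym vv' xv (prednK j_gt0) eqxx.
Qed.

Lemma drg_b_gt0 j : (j < D)%N -> (0 < b j)%N.
Proof.
case/drg_edge_levels => x [v [v' [vv' xv xv']]].
have [_ _] := drg_counts x v; rewrite xv => <-.
by apply/card_gt0P; exists v'; rewrite !inE vv' xv' eqxx.
Qed.

Lemma drg_common_neighbour y z : (0 < a 1)%N -> e y z -> exists w, e y w && e z w.
Proof.
move=> a1_gt0 yz; have [_ card_a1 _] := drg_counts y z.
rewrite (dist_edge e_irr yz) in card_a1.
have /card_gt0P [w] : (0 < #|[set t | e z t & dist y t == 1%N]|)%N by rewrite card_a1.
by rewrite !inE => /andP[zw /eqP/dist1_edge yw]; exists w; rewrite yw.
Qed.

Lemma drg_a_gt0 : (0 < a 1)%N -> forall j, (0 < j < D)%N -> (0 < a j)%N.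
Proof.
move=> a1_gt0 j /andP[j_gt0 lt_jD].
(* The edge yz between levels j and j+1 lies in a triangle yzw; if w is not at level j
   from x, it is at level j from a neighbour p of x on a geodesic from x to y. *)
have [x [y [z [yz xy xz]]]] := drg_edge_levels lt_jD.
have [w /andP[yw zw]] := drg_common_neighbour a1_gt0 yz.
have := dist_edge_le x yw; have := dist_edge_ge e_sym x zw.
have [xw _ _ | xw_neq le_zw le_wy] := eqVneq (dist x w) j.
  have [_ + _] := drg_counts x y; rewrite xy => <-.
  by apply/card_gt0P; exists w; rewrite !inE yw xw eqxx.
have [] := drg_counts y x; rewrite dist_sym // xy => card_cj _ _.
have /card_gt0P [p] : (0 < #|[set t | e x t & (dist y t).+1 == j]|)%N.
  by rewrite card_cj drg_c_gt0 // j_gt0 ltnW.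
rewrite !inE => /andP[xp /eqP yp].
have := dist_edge_le p yz; have := dist_edge_le p yw.
have := dist_edge_ge e_sym z xp; have := dist_edge_ge e_sym w xp; move: yp.
rewrite !(dist_sym e_sym _ p) !(dist_sym e_sym _ x) => yp le_xw le_xz le_pw le_pz.
have pz : dist p z = j by lia.
have [_ + _] := drg_counts p z; rewrite pz => <-.
by apply/card_gt0P; exists w; rewrite !inE zw; apply/eqP; lia.
Qed.

End DistanceRegular.

Local Open Scope ring_scope.

Lemma eq_of_subr (R : zmodType) (u v x y : R) : u = v -> x - y = u - v -> x = y.
Proof. by move=> -> /eqP; rewrite subrr subr_eq0 => /eqP. Qed.

Lemma eq_of_lincomb (R : comPzRingType) (l1 l2 u1 v1 u2 v2 x y : R) : u1 = v1 -> u2 = v2 ->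
  x - y = l1 * (u1 - v1) + l2 * (u2 - v2) -> x = y.
Proof. by move=> -> ->; rewrite !subrr !mulr0 addr0 => /eqP; rewrite subr_eq0 => /eqP. Qed.

(* [sm], [si], [sp] stand for sigma_{i-1}, sigma_i, sigma_{i+1}, similarly [rm], [ri], [rp]
   for rho, and [sg], [rh] for sigma_1, rho_1. *)
Lemma aux_recurrence_elim (R : comPzRingType) (eps sg rh k c b sm si sp rm ri rp : R) :
  si * ri - sm * rm = eps * (sm * ri - si * rm) ->
  sp * rp - si * ri = eps * (si * rp - sp * ri) ->
  c * (rm - ri) + b * (rp - ri) = k * (rh - 1) * ri ->
  sg * rh - 1 = eps * (rh - sg) ->
  (1 + eps) * ri * ((eps - sg) * (c * (sm - si) * (sp - eps * si) + b * (sp - si) * (sm - eps * si))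
     - k * (1 - sg) * (sm - eps * si) * (sp - eps * si)) = 0.
Proof.
move=> aux_m aux_p rec_r aux_1.
have -> : (1 + eps) * ri * ((eps - sg) * (c * (sm - si) * (sp - eps * si)
       + b * (sp - si) * (sm - eps * si)) - k * (1 - sg) * (sm - eps * si) * (sp - eps * si)) =
   (eps - sg) * (b * (sm - eps * si) * (sp * rp - si * ri - eps * (si * rp - sp * ri))
                 - c * (sp - eps * si) * (si * ri - sm * rm - eps * (sm * ri - si * rm)))
   - (eps - sg) * (sm - eps * si) * (sp - eps * si)
     * (c * (rm - ri) + b * (rp - ri) - k * (rh - 1) * ri)
   + (sm - eps * si) * (sp - eps * si) * k * ri * (sg * rh - 1 - eps * (rh - sg)) by ring.
by rewrite aux_m aux_p rec_r aux_1 !subrr; ring.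
Qed.

Section PseudoCosine.
Variables (R : realFieldType) (D : nat) (a b c : nat -> nat).
Hypotheses (D_ge3 : (3 <= D)%N) (c0 : c 0%N = 0%N) (a0 : a 0%N = 0%N) (c1 : c 1%N = 1%N).
Hypothesis valency : forall j, (j <= D)%N -> (a j + b j + c j = b 0)%N.
Hypothesis c_gt0 : forall j, (0 < j <= D)%N -> (0 < c j)%N.
Hypothesis b_gt0 : forall j, (j < D)%N -> (0 < b j)%N.
Hypothesis a_gt0 : forall j, (0 < j < D)%N -> (0 < a j)%N.

Local Notation k := ((b 0%N)%:R : R).
Local Notation pseudo_cosine := (@pseudo_cosine R D a b c).

Lemma natr_valency j : (j <= D)%N -> k = (a j)%:R + (b j)%:R + (c j)%:R.
Proof. by move=> le_jD; rewrite -(valency le_jD) !natrD. Qed.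

Lemma natr_c_neq_k j : (j < D)%N -> (c j)%:R != k.
Proof.
move=> lt_jD; rewrite -(valency (ltnW lt_jD)) eqr_nat; have := b_gt0 lt_jD; lia.
Qed.

Lemma pseudo_cosine0 s : pseudo_cosine s -> s 0%N = 1.
Proof. by case=> ? []. Qed.

Lemma pseudo_cosine_rec s : pseudo_cosine s -> forall j, (j < D)%N ->
  (c j)%:R * (s j.-1 - s j) + (b j)%:R * (s j.+1 - s j) = k * (s 1%N - 1) * s j.
Proof.
case=> th [s0 rec] j lt_jD.
have theta : th = k * s 1%N.
  by have := rec 0%N (ltnW (ltnW D_ge3)); rewrite c0 a0 /= s0 !mulr1 => <-; ring.
apply: (eq_of_lincomb (l1 := 1) (l2 := s j) (rec j lt_jD) (natr_valency (ltnW lt_jD))).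
by rewrite theta; ring.
Qed.

Lemma pseudo_cosine_succ_neq0 s j : pseudo_cosine s -> (j < D)%N -> s j = 0 -> s j.+1 != 0.
Proof.
move=> pc_s; elim: j => [|j IH] lt_jD sj0.
  by move/eqP: sj0; rewrite (pseudo_cosine0 pc_s) oner_eq0.
apply/eqP => sj1; have := pseudo_cosine_rec pc_s lt_jD; rewrite sj0 sj1 /=.
rewrite subr0 subrr !mulr0 addr0 => /eqP; rewrite mulf_eq0 pnatr_eq0.
have /lt0n_neq0/negbTE -> /= : (0 < c j.+1)%N by apply: c_gt0; lia.
by move=> /eqP /(IH (ltnW lt_jD)); rewrite sj0 eqxx.
Qed.

Lemma pseudo_cosine_s2_gt1 s : pseudo_cosine s -> s 1%N = -1 -> 1 < s 2%N.
Proof.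
move=> pc_s s1; have := pseudo_cosine_rec pc_s (j := 1%N) (ltnW D_ge3).
rewrite /= c1 (pseudo_cosine0 pc_s) s1.
rewrite (natr_valency (j := 1%N) (ltnW (ltnW D_ge3))) c1 => rec1.
have b1_gt0 : 0 < (b 1%N)%:R :> R by rewrite ltr0n b_gt0 ?(ltnW D_ge3).
have a1_gt0 : 0 < (a 1%N)%:R :> R by rewrite ltr0n a_gt0 ?(ltnW D_ge3).
have q1 : (b 1%N)%:R * (s 2%N - 1) = 2 * (a 1%N)%:R.
  by apply: (eq_of_subr rec1); ring.
by rewrite -subr_gt0 -(pmulr_rgt0 _ b1_gt0) q1 mulr_gt0.
Qed.

Lemma pseudo_cosine_s3_neq s : pseudo_cosine s -> s 1%N = -1 -> s 3%N != - s 2%N.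
Proof.
move=> pc_s s1; apply/eqP => s3; have s2_gt1 := pseudo_cosine_s2_gt1 pc_s s1.
have := pseudo_cosine_rec pc_s (j := 2%N) D_ge3.
rewrite /= s1 s3 (natr_valency (ltnW D_ge3)) => rec2.
have c2_gt0 : 0 < (c 2%N)%:R :> R by rewrite ltr0n c_gt0 ?(ltnW D_ge3).
have a2_ge0 : 0 <= (a 2%N)%:R :> R by rewrite ler0n.
have : (s 2%N - 1) * (2 * (a 2%N)%:R + (c 2%N)%:R) + 2 * (a 2%N)%:R = 0.
  by apply: (eq_of_subr rec2); ring.
have : 0 < (s 2%N - 1) * (2 * (a 2%N)%:R + (c 2%N)%:R) by apply: mulr_gt0; lra.
lra.
Qed.

Lemma pseudo_cosine_r3_neq r : pseudo_cosine r -> r 1%N != 1 -> r 2%N = r 1%N ->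
  r 3%N != r 2%N.
Proof.
move=> pc_r r1_neq1 r2; apply/eqP => r3.
have := pseudo_cosine_rec pc_r (j := 1%N) (ltnW D_ge3).
rewrite /= c1 (pseudo_cosine0 pc_r) r2 => rec1.
have kr1 : k * r 1%N = -1.
  have : (1 - r 1%N) * (1 + k * r 1%N) = 0 by apply: (eq_of_subr rec1); ring.
  move/eqP; rewrite mulf_eq0 subr_eq0 eq_sym (negbTE r1_neq1) /= => /eqP kr1.
  by apply: (eq_of_subr kr1); ring.
have := pseudo_cosine_rec pc_r (j := 2%N) D_ge3; rewrite /= r3 r2 => rec2.
have : 1 - r 1%N = 0 by apply: (eq_of_lincomb (l1 := -1) (l2 := 1 - r 1%N) rec2 kr1); ring.
by move/eqP; rewrite subr_eq0 eq_sym (negbTE r1_neq1).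
Qed.

Lemma aux_param_neqN1 s r eps : pseudo_cosine s -> pseudo_cosine r -> r 1%N != 1 ->
  aux_param D s r eps -> eps != -1.
Proof.
move=> pc_s pc_r r1_neq1 aux; apply/eqP => epsN1.
(* The relations at j = 1, 2, 3 successively force sigma_1 = -1, rho_2 = rho_1 and
   sigma_3 = - sigma_2, which is incompatible with the recurrence of sigma at 2. *)
have factor j : (0 < j <= D)%N -> (s j + s j.-1) * (r j - r j.-1) = 0.
  by move/aux; rewrite epsN1 => auxj; apply: (eq_of_subr auxj); ring.
have s1 : s 1%N = -1.
  move: (factor 1%N (ltnW (ltnW D_ge3))) => /eqP.
  rewrite /= (pseudo_cosine0 pc_s) (pseudo_cosine0 pc_r) mulf_eq0 subr_eq0.
  by rewrite (negbTE r1_neq1) orbF addr_eq0 => /eqP.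
have r2 : r 2%N = r 1%N.
  move: (factor 2%N (ltnW D_ge3)) => /eqP; rewrite /= s1 mulf_eq0 subr_eq0.
  by rewrite gt_eqF ?pseudo_cosine_s2_gt1 //= subr_eq0 => /eqP.
move: (factor 3%N D_ge3) => /eqP; rewrite /= mulf_eq0 subr_eq0.
rewrite (negbTE (pseudo_cosine_r3_neq pc_r r1_neq1 r2)) orbF addr_eq0.
by rewrite (negbTE (pseudo_cosine_s3_neq pc_s s1)).
Qed.

Lemma aux_paramC (s r : nat -> R) eps : aux_param D s r eps -> aux_param D r s (- eps).
Proof. by move=> aux i le_iD; rewrite mulrC [r i.-1 * _]mulrC aux //; ring. Qed.

Section AuxiliaryParameter.
Variables (s r : nat -> R) (eps : R).
Hypotheses (pc_s : pseudo_cosine s) (pc_r : pseudo_cosine r).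
Hypotheses (s1_neq1 : s 1%N != 1) (r1_neq1 : r 1%N != 1) (aux : aux_param D s r eps).
Local Notation sg := (s 1%N).

Let eps_neqN1 : eps != -1 := aux_param_neqN1 pc_s pc_r r1_neq1 aux.

Let eps_neq1 : eps != 1.
Proof. by rewrite -eqr_opp (aux_param_neqN1 pc_r pc_s s1_neq1 (aux_paramC aux)). Qed.

Lemma aux_param1 : sg * r 1%N - 1 = eps * (r 1%N - sg).
Proof.
have := aux (i := 1%N) (ltnW (ltnW D_ge3)).
by rewrite /= (pseudo_cosine0 pc_s) (pseudo_cosine0 pc_r) !mul1r mulr1.
Qed.

Lemma aux_eps_neq_s1 : eps != sg.
Proof.
apply: contra eps_neqN1 => /eqP eps_sg.
have : (sg - 1) * (sg + 1) = 0.
  by apply: (eq_of_subr aux_param1); rewrite eps_sg; ring.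
move/eqP; rewrite mulf_eq0 subr_eq0 (negbTE s1_neq1) addr_eq0 /= => /eqP sgN1.
by rewrite eps_sg sgN1.
Qed.

Lemma aux_param_r_eq0 i : (0 < i < D)%N -> r i = 0 ->
  s i.-1 = eps * s i /\ s i.+1 = eps * s i.
Proof.
case/andP=> i_gt0 lt_iD ri0.
have rm_neq0 : r i.-1 != 0.
  apply: contra_eqN ri0 => /eqP rm0.
  by have := pseudo_cosine_succ_neq0 pc_r (j := i.-1) _ rm0; rewrite prednK //; apply; lia.
have rp_neq0 : r i.+1 != 0 by apply: pseudo_cosine_succ_neq0.
have aux_i := aux (i := i) ltac:(lia); have aux_Si := aux (i := i.+1) ltac:(lia).
split; [apply/esym/(mulfI rm_neq0) | apply/(mulfI rp_neq0)].
  by apply: (eq_of_subr aux_i); rewrite ri0; ring.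
by apply: (eq_of_subr aux_Si); rewrite /= ri0; ring.
Qed.

Lemma aux_identity i : (0 < i < D)%N ->
  (eps - sg) * ((c i)%:R * (s i.-1 - s i) * (s i.+1 - eps * s i)
                + (b i)%:R * (s i.+1 - s i) * (s i.-1 - eps * s i))
  = k * (1 - sg) * (s i.-1 - eps * s i) * (s i.+1 - eps * s i).
Proof.
move=> i_range; have /andP[i_gt0 lt_iD] := i_range.
have [ri0 | ri_neq0] := eqVneq (r i) 0.
  by have [-> ->] := aux_param_r_eq0 i_range ri0; rewrite !subrr; ring.
have := aux_recurrence_elim (aux (i := i) ltac:(lia)) (aux (i := i.+1) ltac:(lia))
  (pseudo_cosine_rec pc_r lt_iD) aux_param1.
move/eqP; rewrite !mulf_eq0 (negbTE ri_neq0) orbF subr_eq0 addrC addr_eq0.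
by rewrite (negbTE eps_neqN1) => /eqP.
Qed.

Lemma aux_a_identity i : (0 < i < D)%N ->
  (a i)%:R * (eps - sg) * ((s i.-1 - s i) * (s i.+1 - s i)) =
  k * (eps - 1) * ((s i.-1 - sg * s i) * (s i.+1 - sg * s i)).
Proof.
move=> i_range; have /andP[_ lt_iD] := i_range.
have -> : (a i)%:R = k - (b i)%:R - (c i)%:R :> R.
  by rewrite (natr_valency (ltnW lt_iD)); ring.
apply: (eq_of_lincomb (l1 := -1) (l2 := - (eps - sg) * (eps - 1) * s i)
  (aux_identity i_range) (pseudo_cosine_rec pc_s lt_iD)); ring.
Qed.

Lemma aux_k_identity : (eps - sg) * (s 2%N - 1) = k * (1 - eps * sg) * (s 2%N - sg ^+ 2).
Proof.
have i_range : (0 < 1 < D)%N by rewrite /= (ltnW D_ge3).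
have := aux_identity i_range; have := pseudo_cosine_rec pc_s (j := 1%N) (ltnW D_ge3).
rewrite /= c1 (pseudo_cosine0 pc_s) => rec1 aux1.
have sg_neq1 : 1 - sg != 0 by rewrite subr_eq0 eq_sym.
apply: (mulfI sg_neq1).
by apply: (eq_of_lincomb (l1 := 1) (l2 := - (eps - sg) * (1 - eps * sg)) aux1 rec1); ring.
Qed.

Lemma aux_s2_neq1 : s 2%N != 1.
Proof.
apply/eqP => s2_1; have a2_neq0 : a 2%N != 0%N by rewrite -lt0n a_gt0.
have s3_1 : s 3%N = 1.
  have := aux_a_identity (i := 2%N) ltac:(lia); rewrite /= s2_1 mulr1 subrr.
  rewrite !(mulr0, mul0r) => /eqP; rewrite !mulf_eq0 !subr_eq0 pnatr_eq0.
  by rewrite (negbTE a2_neq0) (negbTE aux_eps_neq_s1) (negbTE s1_neq1) => /eqP.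
have sg_neq1 : sg - 1 != 0 by rewrite subr_eq0.
have := pseudo_cosine_rec pc_s (j := 2%N) D_ge3; rewrite /= s2_1 s3_1 => rec2.
have /eqP : (c 2%N)%:R = k.
  by apply: (mulIf sg_neq1); apply: (eq_of_subr rec2); ring.
by rewrite (negbTE (natr_c_neq_k D_ge3)).
Qed.

Lemma aux_s_succ_neq j : (j < D)%N -> s j.+1 != s j.
Proof.
case: j => [_ | j lt_jD]; first by rewrite (pseudo_cosine0 pc_s).
apply/eqP => s_eq.
have sj_neq0 : s j.+1 != 0.
  apply/eqP => sj0; have := pseudo_cosine_succ_neq0 pc_s lt_jD sj0.
  by rewrite s_eq sj0 eqxx.
have k_neq0 : k != 0 by rewrite pnatr_eq0 -lt0n b_gt0 // (ltn_trans _ lt_jD).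
have eps1 : eps - 1 != 0 by rewrite subr_eq0 eps_neq1.
have sg1 : 1 - sg != 0 by rewrite subr_eq0 eq_sym.
have sj_sg : s j = sg * s j.+1.
  have := aux_a_identity (i := j.+1) lt_jD; rewrite /= s_eq subrr !(mulr0, mul0r) => /eqP.
  move/eqP/esym/eqP; rewrite !mulf_eq0 (negbTE k_neq0) (negbTE eps1) /=.
  have -> : s j.+1 - sg * s j.+1 = s j.+1 * (1 - sg) by ring.
  by rewrite mulf_eq0 (negbTE sj_neq0) (negbTE sg1) !orbF subr_eq0 => /eqP.
have := pseudo_cosine_rec pc_s lt_jD; rewrite /= s_eq sj_sg => rec.
have /eqP : (c j.+1)%:R = k.
  apply/esym/(mulIf (mulf_neq0 sg1 sj_neq0)).
  by apply: (eq_of_subr rec); ring.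
by rewrite (negbTE (natr_c_neq_k lt_jD)).
Qed.

Lemma aux_a_formula i : (0 < i < D)%N ->
  [/\ (s i.+1 - s i) * (s i.-1 - s i) != 0,
      (sg ^+ 2 - s 2%N) * (1 - eps * sg) != 0 &
      (a i)%:R = (eps - 1) * (1 - s 2%N) / ((sg ^+ 2 - s 2%N) * (1 - eps * sg))
                 * ((s i.+1 - sg * s i) * (s i.-1 - sg * s i))
                 / ((s i.+1 - s i) * (s i.-1 - s i))].
Proof.
move=> i_range; have /andP[i_gt0 lt_iD] := i_range.
have eps_sg : eps - sg != 0 by rewrite subr_eq0 aux_eps_neq_s1.
have sm_neq : s i.-1 - s i != 0.
  have := @aux_s_succ_neq i.-1; rewrite prednK // subr_eq0 eq_sym; apply; exact: ltnW.
have sp_neq : s i.+1 - s i != 0 by rewrite subr_eq0 aux_s_succ_neq.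
have den_neq0 : (sg ^+ 2 - s 2%N) * (1 - eps * sg) != 0.
  have : (eps - sg) * (s 2%N - 1) != 0 by rewrite mulf_neq0 // subr_eq0 aux_s2_neq1.
  apply: contraNneq => den0; rewrite aux_k_identity.
  have -> : k * (1 - eps * sg) * (s 2%N - sg ^+ 2)
          = - k * ((sg ^+ 2 - s 2%N) * (1 - eps * sg)) by ring.
  by rewrite den0 mulr0.
have a_eq : (a i)%:R = k * (eps - 1) * ((s i.-1 - sg * s i) * (s i.+1 - sg * s i))
                       / ((eps - sg) * ((s i.-1 - s i) * (s i.+1 - s i))).
  apply: (canRL (mulfK _)); first by rewrite !mulf_neq0.
  by rewrite -(aux_a_identity i_range); ring.
have k_eq : k = (eps - sg) * (1 - s 2%N) / ((sg ^+ 2 - s 2%N) * (1 - eps * sg)).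
  by apply: (canRL (mulfK den_neq0)); apply: (eq_of_subr aux_k_identity); ring.
split; [by rewrite mulf_neq0 | by [] | rewrite a_eq k_eq; field].
by move: den_neq0; rewrite mulf_eq0 negb_or => /andP[-> ->]; rewrite sm_neq sp_neq eps_sg.
Qed.

End AuxiliaryParameter.

End PseudoCosine.

Theorem lemma13p2 (T : finType) (e : rel T) (D : nat) (a b c : nat -> nat)
  (R : realFieldType) (s : nat -> R) (eps : R) :
  distance_regular e D a b c -> (3 <= D)%N -> a 1%N <> 0%N ->
  tight_with_aux D a b c s eps ->
  let sg := s 1%N in
  let g := (eps - 1) * (1 - s 2%N) / ((sg ^+ 2 - s 2%N) * (1 - eps * sg)) in
  forall i : nat, (1 <= i <= D.-1)%N ->
    [/\ (s i.+1 - s i) * (s i.-1 - s i) != 0,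
        (sg ^+ 2 - s 2%N) * (1 - eps * sg) != 0 &
        (a i)%:R = g * ((s i.+1 - sg * s i) * (s i.-1 - sg * s i))
                     / ((s i.+1 - s i) * (s i.-1 - s i))].
Proof.
move=> drg D_ge3 a1_neq0 [s1_neq1 [pc_s [r [pc_r r1_neq1 _ aux]]]] sg g i i_range.
have D_gt0 : (0 < D)%N by apply: leq_trans D_ge3.
have a1_gt0 : (0 < a 1)%N by rewrite lt0n; apply/eqP.
apply: (aux_a_formula D_ge3 (drg_c0 drg D_gt0) (drg_a0 drg D_gt0) (drg_c1 drg D_gt0)
  (@drg_valency _ _ _ _ _ _ drg D_gt0) (@drg_c_gt0 _ _ _ _ _ _ drg D_gt0)
  (@drg_b_gt0 _ _ _ _ _ _ drg D_gt0) (drg_a_gt0 drg D_gt0 a1_gt0)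
  pc_s pc_r s1_neq1 r1_neq1 aux).
by move: i_range; lia.
Qed.
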